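(* Let $\mathcal D\subset\mathbb R^d$ be a nonempty compact convex set with Euclidean diameter $M$, and let $f$ be convex and differentiable on an open set containing $\mathcal D$ with $\nabla f$ being $L$-Lipschitz on $\mathcal D$ (Euclidean norm). For $x\in\mathcal D$ let $h(x):=f(x)-\min_{\mathcal D}f$ and $g^{FW}(x):=\max_{s\in\mathcal D}\langle-\nabla f(x),s-x\rangle$. Then for every $x\in\mathcal D$: if $h(x)>LM^2/2$ then $g^{FW}(x)\le h(x)+LM^2/2$, and otherwise $g^{FW}(x)\le M\sqrt{2h(x)L}$. *)

From Stdlib Require Vectors.Fin.
From Stdlib Require Import Reals List.
Open Scope R_scope.

Definition vec (d : nat) := Fin.t d -> R.

Fixpoint fsum (d : nat) : (Fin.t d -> R) -> R :=
  match d with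
  | O => fun _ => 0
  | S n => fun F => F Fin.F1 + fsum n (fun i => F (Fin.FS i))
  end.

Definition vadd {d} (x y : vec d) : vec d := fun i => x i + y i.
Definition vsub {d} (x y : vec d) : vec d := fun i => x i - y i.
Definition vscale {d} (a : R) (x : vec d) : vec d := fun i => a * x i.
Definition vopp {d} (x : vec d) : vec d := fun i => - x i.

Definition dot {d} (x y : vec d) : R := fsum d (fun i => x i * y i).
Definition norm {d} (x : vec d) : R := sqrt (dot x x).

Definition is_open {d} (U : vec d -> Prop) : Prop :=
  forall x, U x -> exists eps, 0 < eps /\
    forall y, norm (vsub y x) < eps -> U y.

Definition is_compact {d} (D : vec d -> Prop) : Prop :=
  forall (I : Type) (V : I -> vec d -> Prop),
    (forall i, is_open (V i)) ->
    (forall x, D x -> exists i, V i x) ->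
    exists l : list I, forall x, D x -> exists i, List.In i l /\ V i x.

Definition is_convex {d} (D : vec d -> Prop) : Prop :=
  forall x y t, D x -> D y -> 0 <= t <= 1 ->
    D (vadd (vscale (1 - t) x) (vscale t y)).

Definition convex_on {d} (U : vec d -> Prop) (f : vec d -> R) : Prop :=
  forall x y t, U x -> U y -> 0 <= t <= 1 ->
    f (vadd (vscale (1 - t) x) (vscale t y)) <= (1 - t) * f x + t * f y.

Definition has_gradient_on {d} (U : vec d -> Prop) (f : vec d -> R)
    (gf : vec d -> vec d) : Prop :=
  forall x, U x -> forall eps, 0 < eps -> exists delta, 0 < delta /\
    forall h, 0 < norm h < delta ->
      Rabs (f (vadd x h) - f x - dot (gf x) h) <= eps * norm h.

Definition is_diameter {d} (D : vec d -> Prop) (M : R) : Prop :=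
  is_lub (fun r => exists x y, D x /\ D y /\ r = norm (vsub x y)) M.

Definition lipschitz_on {d} (D : vec d -> Prop) (g : vec d -> vec d) (L : R) : Prop :=
  forall x y, D x -> D y -> norm (vsub (g x) (g y)) <= L * norm (vsub x y).

Definition is_min_on {d} (D : vec d -> Prop) (f : vec d -> R) (m : R) : Prop :=
  (exists x0, D x0 /\ f x0 = m) /\ (forall y, D y -> m <= f y).

(* G = g^FW(x) = max_{s in D} <-grad f(x), s - x>  (as supremum; attained by compactness) *)
Definition is_fw_gap {d} (D : vec d -> Prop) (gf : vec d -> vec d) (x : vec d) (G : R) : Prop :=
  is_lub (fun r => exists s, D s /\ r = dot (vopp (gf x)) (vsub s x)) G.

From Stdlib Require Import Reals Lra Psatz FunctionalExtensionality.
Open Scope R_scope.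

(* Write h := f x - min f and c := L M^2 / 2.  For s in D and a step gam in
   [0,1], the point x + gam (s - x) stays in D, and the descent lemma (which
   only uses the Lipschitz gradient, not convexity of f) gives
     m <= f (x + gam (s - x)) <= f x - gam <-grad f(x), s - x> + c gam^2,
   i.e. gam g <= h + c gam^2 for g := <-grad f(x), s - x>.  Taking gam = 1
   gives the first bound, and the optimal step gam = g / (2c) gives
   g^2 <= 4 h c, which is the second one. *)

Lemma fsum_ext d (F G : Fin.t d -> R) :
  (forall i, F i = G i) -> fsum d F = fsum d G.
Proof.
  revert F G; induction d as [|d IH]; intros F G H; simpl; [reflexivity|].
  rewrite H, (IH (fun i => F (Fin.FS i)) (fun i => G (Fin.FS i))); auto.
Qed.

Lemma fsum_add d (F G : Fin.t d -> R) :
  fsum d (fun i => F i + G i) = fsum d F + fsum d G.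
Proof.
  revert F G; induction d as [|d IH]; intros F G; simpl; [ring|].
  rewrite (IH (fun i => F (Fin.FS i)) (fun i => G (Fin.FS i))); ring.
Qed.

Lemma fsum_scal d (F : Fin.t d -> R) c : fsum d (fun i => c * F i) = c * fsum d F.
Proof.
  revert F; induction d as [|d IH]; intros F; simpl; [ring|].
  rewrite (IH (fun i => F (Fin.FS i))); ring.
Qed.

Lemma fsum_nonneg d (F : Fin.t d -> R) : (forall i, 0 <= F i) -> 0 <= fsum d F.
Proof.
  revert F; induction d as [|d IH]; intros F H; simpl; [lra|].
  pose proof (IH (fun i => F (Fin.FS i)) (fun i => H _)).
  pose proof (H Fin.F1). lra.
Qed.

Section Vectors.

Variable d : nat.
Implicit Types a b x s v : vec d.

Lemma dot_nonneg a : 0 <= dot a a.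
Proof. apply fsum_nonneg; intros; nra. Qed.

Lemma dot_sub_l a b v : dot (vsub a b) v = dot a v - dot b v.
Proof.
  unfold dot, vsub.
  rewrite (fsum_ext _ _ (fun i => a i * v i + -1 * (b i * v i))) by (intros; ring).
  rewrite fsum_add, fsum_scal; ring.
Qed.

Lemma dot_opp_l a b : dot (vopp a) b = - dot a b.
Proof.
  unfold dot, vopp.
  rewrite (fsum_ext _ _ (fun i => -1 * (a i * b i))) by (intros; ring).
  rewrite fsum_scal; ring.
Qed.

Lemma dot_scale_l t a b : dot (vscale t a) b = t * dot a b.
Proof.
  unfold dot, vscale; rewrite <- fsum_scal; apply fsum_ext; intros; ring.
Qed.

Lemma dot_scale_r t a b : dot a (vscale t b) = t * dot a b.
Proof.
  unfold dot, vscale; rewrite <- fsum_scal; apply fsum_ext; intros; ring.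
Qed.

Lemma dot_sub_scale a b t :
  dot (vsub a (vscale t b)) (vsub a (vscale t b)) =
  dot a a - 2 * t * dot a b + t ^ 2 * dot b b.
Proof.
  unfold dot, vsub, vscale.
  rewrite (fsum_ext _ _
    (fun i => a i * a i + ((-2 * t) * (a i * b i) + t ^ 2 * (b i * b i))))
    by (intros; ring).
  rewrite !fsum_add, !fsum_scal; ring.
Qed.

(* Evaluate |a - t b|^2 >= 0 at t = <a,b>/|b|^2, or, when |b| = 0, at a t
   making the (then affine) quadratic negative unless <a,b> = 0. *)
Lemma dot_cauchy_schwarz a b : dot a b ^ 2 <= dot a a * dot b b.
Proof.
  assert (Hq : forall t, 0 <= dot a a - 2 * t * dot a b + t ^ 2 * dot b b).
  { intro t; rewrite <- dot_sub_scale; apply dot_nonneg. }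
  pose proof (dot_nonneg a) as Ha; pose proof (dot_nonneg b) as Hb.
  destruct (Req_dec (dot b b) 0) as [Hb0|Hb0].
  - destruct (Req_dec (dot a b) 0) as [Hab|Hab].
    + rewrite Hab, Hb0; lra.
    + specialize (Hq ((dot a a + 1) / (2 * dot a b))).
      rewrite Hb0 in Hq.
      replace (2 * ((dot a a + 1) / (2 * dot a b)) * dot a b) with (dot a a + 1)
        in Hq by (field; auto).
      lra.
  - pose proof (Hq (dot a b / dot b b)) as Hopt.
    assert (Hu : dot a b / dot b b * dot b b = dot a b) by (field; auto).
    set (u := dot a b / dot b b) in *.
    nra.
Qed.

Lemma norm_nonneg a : 0 <= norm a.
Proof. apply sqrt_pos. Qed.

Lemma abs_dot_le a b : Rabs (dot a b) <= norm a * norm b.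
Proof.
  unfold norm; rewrite <- sqrt_mult by apply dot_nonneg.
  rewrite <- sqrt_Rsqr_abs; apply sqrt_le_1_alt.
  rewrite Rsqr_pow2; apply dot_cauchy_schwarz.
Qed.

Lemma dot_le a b : dot a b <= norm a * norm b.
Proof. pose proof (abs_dot_le a b); pose proof (Rle_abs (dot a b)); lra. Qed.

Lemma dot_norm0_r a b : norm b = 0 -> dot a b = 0.
Proof.
  intro Hb; pose proof (abs_dot_le a b) as H; rewrite Hb, Rmult_0_r in H.
  pose proof (Rle_abs (dot a b)); pose proof (Rle_abs (- dot a b)).
  rewrite Rabs_Ropp in *; lra.
Qed.

Lemma norm_scale t a : norm (vscale t a) = Rabs t * norm a.
Proof.
  unfold norm; rewrite dot_scale_l, dot_scale_r, <- Rmult_assoc.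
  rewrite sqrt_mult_alt by nra.
  rewrite <- sqrt_Rsqr_abs; reflexivity.
Qed.

Lemma vadd_scale0 x v : vadd x (vscale 0 v) = x.
Proof. apply functional_extensionality; intro i; unfold vadd, vscale; ring. Qed.

Lemma vadd_scaleD x v t h :
  vadd x (vscale (t + h) v) = vadd (vadd x (vscale t v)) (vscale h v).
Proof. apply functional_extensionality; intro i; unfold vadd, vscale; ring. Qed.

Lemma vsub_vadd_l x v : vsub (vadd x v) x = v.
Proof. apply functional_extensionality; intro i; unfold vadd, vsub; ring. Qed.

Lemma convex_segment (D : vec d -> Prop) x s t :
  is_convex D -> D x -> D s -> 0 <= t <= 1 -> D (vadd x (vscale t (vsub s x))).
Proof.
  intros hD Hx Hs Ht.
  replace (vadd x (vscale t (vsub s x))) with (vadd (vscale (1 - t) x) (vscale t s))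
    by (apply functional_extensionality; intro i; unfold vadd, vscale, vsub; ring).
  exact (hD x s t Hx Hs Ht).
Qed.

End Vectors.

Lemma diameter_ub d (D : vec d -> Prop) M a b :
  is_diameter D M -> D a -> D b -> norm (vsub a b) <= M.
Proof. intros [Hub _] Ha Hb; apply Hub; exists a, b; auto. Qed.

Lemma diameter_nonneg d (D : vec d -> Prop) M :
  (exists x, D x) -> is_diameter D M -> 0 <= M.
Proof.
  intros [x Hx] hM.
  pose proof (diameter_ub d D M x x hM Hx Hx); pose proof (norm_nonneg d (vsub x x)).
  lra.
Qed.

(* A negative Lipschitz constant forces D to be a point, hence M = 0. *)
Lemma lipschitz_diameter_nonneg d (D : vec d -> Prop) g L M :
  (exists x, D x) -> is_diameter D M -> lipschitz_on D g L -> 0 <= L * M ^ 2.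
Proof.
  intros hne hM hL.
  pose proof (diameter_nonneg d D M hne hM) as HM.
  destruct (Rlt_le_dec L 0) as [HLneg|HLpos]; [|nra].
  assert (M <= 0); [|replace M with 0 by lra; lra].
  apply (proj2 hM); intros r [a [b [Ha [Hb ->]]]].
  pose proof (hL a b Ha Hb); pose proof (norm_nonneg d (vsub (g a) (g b))).
  pose proof (norm_nonneg d (vsub a b)); nra.
Qed.

Lemma derivable_pt_lim_line d (U : vec d -> Prop) f gf x v t :
  has_gradient_on U f gf -> U (vadd x (vscale t v)) -> 0 < norm v ->
  derivable_pt_lim (fun t => f (vadd x (vscale t v))) t
    (dot (gf (vadd x (vscale t v))) v).
Proof.
  intros hfd HU Hv eps Heps.
  destruct (hfd _ HU (eps / (2 * norm v))) as [delta [Hdelta Hgrad]].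
  { apply Rdiv_lt_0_compat; lra. }
  assert (Hdv : 0 < delta / norm v) by (apply Rdiv_lt_0_compat; lra).
  exists (mkposreal _ Hdv); simpl; intros h Hh0 Hhd.
  assert (Hah : 0 < Rabs h) by (apply Rabs_pos_lt; auto).
  assert (Hstep : Rabs h * norm v < delta).
  { apply Rmult_lt_compat_r with (r := norm v) in Hhd; [|lra].
    unfold Rdiv in Hhd; rewrite Rmult_assoc, Rinv_l in Hhd; lra. }
  specialize (Hgrad (vscale h v)).
  rewrite norm_scale, <- vadd_scaleD, dot_scale_r in Hgrad.
  specialize (Hgrad (conj (Rmult_lt_0_compat _ _ Hah Hv) Hstep)).
  set (A := f (vadd x (vscale (t + h) v))) in *.
  set (B := f (vadd x (vscale t v))) in *.
  set (G := dot (gf (vadd x (vscale t v))) v) in *.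
  replace (eps / (2 * norm v) * (Rabs h * norm v)) with (eps / 2 * Rabs h)
    in Hgrad by (field; lra).
  replace ((A - B) / h - G) with ((A - B - h * G) * / h) by (field; auto).
  rewrite Rabs_mult, Rabs_inv.
  apply Rmult_lt_reg_r with (r := Rabs h); [lra|].
  rewrite Rmult_assoc, Rinv_l by lra; nra.
Qed.

Lemma derivable_pt_lim_quadratic a K t :
  derivable_pt_lim (fun t => a * t + K * t ^ 2) t (a + 2 * K * t).
Proof.
  replace (a + 2 * K * t) with (a * 1 + K * (INR 2 * t ^ Nat.pred 2))
    by (simpl; ring).
  apply (derivable_pt_lim_plus (fun t => a * t) (fun t => K * t ^ 2)).
  - apply (derivable_pt_lim_scal id a t 1), derivable_pt_lim_id.
  - apply (derivable_pt_lim_scal (fun y => y ^ 2)), derivable_pt_lim_pow.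
Qed.

Section FrankWolfeStep.

Variables (d : nat) (D U : vec d -> Prop) (f : vec d -> R) (gf : vec d -> vec d).
Variable L : R.
Hypotheses (hDcv : is_convex D) (hDU : forall x, D x -> U x)
  (hfd : has_gradient_on U f gf) (hL : lipschitz_on D gf L).

(* phi(t) - t <grad f(x), v> - (L/2) |v|^2 t^2 with phi(t) := f (x + t v) has
   derivative <grad f(x + t v) - grad f(x), v> - L |v|^2 t <= 0 on [0,1], so
   by the mean value theorem it is below its value at 0. *)
Lemma descent_lemma x s gam :
  D x -> D s -> 0 < norm (vsub s x) -> 0 < gam <= 1 ->
  f (vadd x (vscale gam (vsub s x))) <=
  f x + gam * dot (gf x) (vsub s x) + L / 2 * norm (vsub s x) ^ 2 * gam ^ 2.
Proof.
  intros Hx Hs Hv Hgam.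
  set (v := vsub s x) in *.
  set (a := dot (gf x) v); set (K := L / 2 * norm v ^ 2).
  destruct (MVT_cor2 (fun t => f (vadd x (vscale t v)) - (a * t + K * t ^ 2))
      (fun t => dot (gf (vadd x (vscale t v))) v - (a + 2 * K * t)) 0 gam)
    as [c [Hmvt Hc]]; [lra| |].
  { intros c Hc; apply derivable_pt_lim_minus.
    - apply (derivable_pt_lim_line d U); auto.
      apply hDU, convex_segment; auto; lra.
    - apply derivable_pt_lim_quadratic. }
  rewrite vadd_scale0 in Hmvt.
  assert (Hderiv : dot (gf (vadd x (vscale c v))) v - (a + 2 * K * c) <= 0).
  { assert (Hxc : D (vadd x (vscale c v))) by (apply convex_segment; auto; lra).
    pose proof (hL _ _ Hxc Hx) as HLip.
    rewrite vsub_vadd_l, norm_scale, Rabs_right in HLip by lra.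
    pose proof (dot_le d (vsub (gf (vadd x (vscale c v))) (gf x)) v) as Hcs.
    rewrite dot_sub_l in Hcs.
    pose proof (norm_nonneg d v).
    unfold K, a; nra. }
  nra.
Qed.

Variables (M m : R).
Hypotheses (hDne : exists x, D x) (hM : is_diameter D M)
  (hmin : forall y, D y -> m <= f y).

Lemma fw_step_bound x s gam :
  D x -> D s -> 0 <= gam <= 1 ->
  gam * dot (vopp (gf x)) (vsub s x) <= (f x - m) + L * M ^ 2 / 2 * gam ^ 2.
Proof.
  intros Hx Hs Hgam.
  rewrite dot_opp_l.
  pose proof (hmin x Hx).
  pose proof (lipschitz_diameter_nonneg d D gf L M hDne hM hL) as HLM.
  destruct (Req_dec (norm (vsub s x)) 0) as [Hv0|Hv0].
  { rewrite (dot_norm0_r d _ _ Hv0); nra. }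
  destruct (Req_dec gam 0) as [->|Hgam0]; [nra|].
  pose proof (norm_nonneg d (vsub s x)).
  pose proof (descent_lemma x s gam Hx Hs ltac:(lra) ltac:(lra)).
  pose proof (hmin _ (convex_segment d D x s gam hDcv Hx Hs Hgam)).
  pose proof (diameter_ub d D M s x hM Hs Hx).
  assert (HL0 : 0 <= L).
  { pose proof (hL s x Hs Hx); pose proof (norm_nonneg d (vsub (gf s) (gf x))); nra. }
  assert (L * norm (vsub s x) ^ 2 <= L * M ^ 2)
    by (apply Rmult_le_compat_l; [|apply pow_incr]; lra).
  nra.
Qed.

End FrankWolfeStep.

Lemma gap_of_quadratic_bound h c g :
  0 <= h -> h <= c ->
  (forall gam, 0 <= gam <= 1 -> gam * g <= h + c * gam ^ 2) ->
  g <= sqrt (4 * h * c).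
Proof.
  intros Hh Hhc Hq.
  destruct (Rle_lt_dec g 0) as [Hg|Hg]; [pose proof (sqrt_pos (4 * h * c)); lra|].
  pose proof (Hq 1 ltac:(lra)) as Hg2c.
  assert (Hc : 0 < c) by nra.
  assert (Hopt : g / (2 * c) * (2 * c) = g) by (field; lra).
  pose proof (Hq (g / (2 * c))) as Hstep.
  set (gam := g / (2 * c)) in *.
  assert (Hgam : 0 <= gam <= 1) by nra.
  specialize (Hstep Hgam).
  rewrite <- (sqrt_pow2 g) by lra.
  apply sqrt_le_1_alt; nra.
Qed.

Theorem theorem2 (d : nat) (D U : vec d -> Prop) (f : vec d -> R)
  (gf : vec d -> vec d) (M L m : R)
  (hDne : exists x0, D x0) (hDc : is_compact D) (hDcv : is_convex D)
  (hM : is_diameter D M)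
  (hUo : is_open U) (hUc : is_convex U) (hDU : forall x, D x -> U x)
  (hfc : convex_on U f) (hfd : has_gradient_on U f gf)
  (hL : lipschitz_on D gf L)
  (hm : is_min_on D f m) :
  forall x G, D x -> is_fw_gap D gf x G ->
    (f x - m > L * M ^ 2 / 2 -> G <= (f x - m) + L * M ^ 2 / 2) /\
    (~ (f x - m > L * M ^ 2 / 2) -> G <= M * sqrt (2 * (f x - m) * L)).
Proof.
  intros x G Hx HG.
  destruct hm as [_ hmin].
  pose proof (hmin x Hx) as Hh.
  pose proof (diameter_nonneg d D M hDne hM) as HM.
  assert (HGle : forall B, (forall s, D s -> dot (vopp (gf x)) (vsub s x) <= B) -> G <= B).
  { intros B HB; apply (proj2 HG); intros r [s [Hs ->]]; auto. }
  pose proof (fw_step_bound d D U f gf L hDcv hDU hfd hL M m hDne hM hmin x)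
    as Hstep.
  split; intros Hcase; apply HGle; intros s Hs.
  - pose proof (Hstep s 1 Hx Hs ltac:(lra)); lra.
  - replace (M * sqrt (2 * (f x - m) * L))
      with (sqrt (4 * (f x - m) * (L * M ^ 2 / 2))).
    + apply gap_of_quadratic_bound; [lra|lra|].
      intros gam Hgam; exact (Hstep s gam Hx Hs Hgam).
    + replace (4 * (f x - m) * (L * M ^ 2 / 2)) with (M ^ 2 * (2 * (f x - m) * L))
        by field.
      rewrite sqrt_mult_alt by apply pow2_ge_0.
      rewrite sqrt_pow2 by exact HM; reflexivity.
Qed.
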